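(* Let $\sigma=\sigma^0\sigma^1\sigma^2\in\{+,-\}^3$ and let $\sigma_r=\sigma^2\sigma^1\sigma^0$ be its reverse. For every integer $n\geq 1$, $L_3^*(n;\sigma)=L_3^*(n;\sigma_r)$.
   Context: A word of length $m$ on $k$ letters is $s=s_1\cdots s_m$ with $s_j\in\{0,\dots,k-1\}$; primitive means not of the form $q^r$ (concatenation of $r$ copies of $q$) with $r>1$. Necklaces are equivalence classes of words under cyclic rotation, primitive if their representatives are. $L_k(m)$ is the number of primitive necklaces of length $m$ on $k$ letters. For $\sigma\in\{+,-\}^k$ let $T_\sigma^-=\{i:\sigma^i=-\}$ and $o_\sigma(s)=|\{j:s_j\in T_\sigma^-\}|$. $L_k(m;\sigma)$ is the number of primitive necklaces of length $m$ on $k$ letters whose representatives $s$ have $o_\sigma(s)$ odd, with $L_k(m;\sigma)=0$ if $m$ is not an integer, and $L_k^*(n;\sigma)=L_k(n)+L_k(\tfrac n2;\sigma)$. *)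

From mathcomp Require Import all_boot.
Unset Printing Implicit Defensive.

(* s is primitive iff it is NOT of the form q^r (r copies of q) with r > 1.
   The exponent r is bounded by size s + 2 and q must then have length
   size s %/ r; these bounds lose nothing (if s = q^r with r > 1 and s
   nonempty, then r <= size s and size q = size s %/ r; if s is empty,
   r = 2 and q = [::] witness it). *)
Definition primitiveb (k : nat) (s : seq 'I_k) : bool :=
  ~~ [exists r : 'I_(size s).+3,
        exists q : (size s %/ r).-tuple 'I_k,
          (1 < r) && (s == flatten (nseq r (val q)))].

Definition necklace (k m : nat) (s : m.-tuple 'I_k) : {set m.-tuple 'I_k} :=
  [set t : m.-tuple 'I_k | [exists i : 'I_m.+1, val t == rot i (val s)]].

Definition Lnum (k m : nat) : nat :=
  #|[set necklace k m s | s : m.-tuple 'I_k & primitiveb k (val s)]|.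

Inductive sgn := Plus | Minus.

Definition isMinus (x : sgn) : bool := if x is Minus then true else false.

Definition o_sigma (k : nat) (sigma : 'I_k -> sgn) (s : seq 'I_k) : nat :=
  count (fun a => isMinus (sigma a)) s.

Definition Lsig (k m : nat) (sigma : 'I_k -> sgn) : nat :=
  #|[set necklace k m s | s : m.-tuple 'I_k &
        primitiveb k (val s) && odd (o_sigma k sigma (val s))]|.

Definition Lstar (k n : nat) (sigma : 'I_k -> sgn) : nat :=
  Lnum k n + (if odd n then 0 else Lsig k n./2 sigma).

(* Reversing sigma relabels the alphabet by the bijection i |-> 2 - i.  A
   relabelling f of the letters maps primitive words to primitive words and
   necklaces to necklaces, and o_{sigma o f}(s) = o_sigma(f s); hence
   L_k(m; sigma o f) = L_k(m; sigma) for every bijection f, while L_k(n)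
   does not involve sigma at all. *)

From mathcomp Require Import all_boot.

Lemma size_flatten_nseq (T : Type) (r : nat) (q : seq T) :
  size (flatten (nseq r q)) = r * size q.
Proof. by rewrite size_flatten /shape map_nseq sumn_nseq mulnC. Qed.

Lemma primitivebPn (k : nat) (s : seq 'I_k) :
  reflect (exists r q, 1 < r /\ s = flatten (nseq r q)) (~~ primitiveb k s).
Proof.
rewrite /primitiveb negbK; apply: (iffP existsP).
  by case=> r /existsP [q /andP [r_gt1 /eqP ->]]; exists r, (val q).
case=> r [q [r_gt1 def_s]].
(* The bound on r in primitiveb excludes large r only for the empty word,
   which is also of the form q^2. *)
have {r q r_gt1 def_s} [r [q [r_gt1 r_lt def_s]]] :
    exists r q, [/\ 1 < r, r < (size s).+3 & s = flatten (nseq r q)].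
  have [q0 | q_gt0] := posnP (size q).
    exists 2, [::]; split=> //; apply/nilP.
    by rewrite /nilp def_s size_flatten_nseq q0 muln0.
  exists r, q; split=> //.
  by rewrite def_s size_flatten_nseq !ltnS (leq_trans (leq_pmulr r q_gt0)) ?leqW.
exists (Ordinal r_lt); apply/existsP.
have size_q : size q == size s %/ r.
  by rewrite def_s size_flatten_nseq mulKn ?(ltnW r_gt1).
by exists (Tuple size_q); rewrite r_gt1 -def_s eqxx.
Qed.

Lemma primitivebN_map {k k' : nat} (f : 'I_k -> 'I_k') (s : seq 'I_k) :
  ~~ primitiveb k s -> ~~ primitiveb k' (map f s).
Proof.
case/primitivebPn=> r [q [r_gt1 ->]]; apply/primitivebPn.
by exists r, (map f q); rewrite map_flatten map_nseq.
Qed.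

Lemma primitiveb_map {k k' : nat} {f : 'I_k -> 'I_k'} {g : 'I_k' -> 'I_k} :
  cancel f g -> forall s, primitiveb k' (map f s) = primitiveb k s.
Proof.
move=> fK s; apply/idP/idP; apply: contraLR; first exact: primitivebN_map.
by move/(primitivebN_map g); rewrite -map_comp (eq_map fK) map_id.
Qed.

Lemma o_sigma_map {k k' : nat} (f : 'I_k -> 'I_k') (sig : 'I_k' -> sgn)
    (s : seq 'I_k) :
  o_sigma k' sig (map f s) = o_sigma k (fun i => sig (f i)) s.
Proof. by rewrite /o_sigma count_map. Qed.

Lemma necklace_map {k k' m : nat} (f : 'I_k -> 'I_k') (s : m.-tuple 'I_k) :
  necklace k' m (map_tuple f s) = map_tuple f @: necklace k m s.
Proof.
apply/setP=> t; rewrite inE; apply/existsP/imsetP => [[i /eqP def_t]|].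
  exists [tuple of rot i s]; first by rewrite inE; apply/existsP; exists i.
  by apply: val_inj; rewrite def_t /= map_rot.
case=> u; rewrite inE => /existsP [i /eqP def_u] ->.
by exists i; rewrite /= def_u map_rot.
Qed.

Lemma map_tupleK (n : nat) {T U : Type} {h : T -> U} {h' : U -> T} :
  cancel h h' -> cancel (@map_tuple n _ _ h) (map_tuple h').
Proof. by move=> hK s; apply: val_inj; rewrite /= -map_comp (eq_map hK) map_id. Qed.

Section Relabelling.

Context {k m : nat} {f g : 'I_k -> 'I_k}.
Hypotheses (fK : cancel f g) (gK : cancel g f).

Lemma card_necklaces_relabel (P : pred (seq 'I_k)) :
  #|[set necklace k m s | s : m.-tuple 'I_k & P (map f s)]|
  = #|[set necklace k m s | s : m.-tuple 'I_k & P s]|.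
Proof.
have fmK := map_tupleK m fK; have gmK := map_tupleK m gK.
(* Push both sides through the injection A |-> map f @: A of necklace sets. *)
rewrite -(card_imset _ (imset_inj (can_inj fmK))) -imset_comp.
under eq_imset => s do rewrite /= -necklace_map.
rewrite (imset_comp (necklace k m)) (can2_imset_pre _ fmK gmK).
rewrite (_ : _ @^-1: _ = [set s : m.-tuple _ | P s]) //.
by apply/setP=> s; rewrite !inE /= -map_comp (eq_map gK) map_id.
Qed.

Lemma Lsig_relabel (sig : 'I_k -> sgn) :
  Lsig k m (fun i => sig (f i)) = Lsig k m sig.
Proof.
rewrite /Lsig -(card_necklaces_relabel
  (fun s => primitiveb k s && odd (o_sigma k sig s))).
by under eq_finset => s do rewrite -(primitiveb_map fK) -o_sigma_map.
Qed.

End Relabelling.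

Theorem lemma2p3 (sigma : 'I_3 -> sgn) (n : nat) :
  1 <= n -> Lstar 3 n sigma = Lstar 3 n (fun i : 'I_3 => sigma (rev_ord i)).
Proof. by move=> _; rewrite /Lstar (Lsig_relabel rev_ordK rev_ordK). Qed.
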